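(* Let $K$ be a field of characteristic zero and let $A_2$ be either $K\langle x,y\rangle$ or $K[x,y]$. Let $r=x+w(x,y)$, where $w(x,y)$ belongs to the two-sided ideal of $A_2$ generated by $y$ and $w(x,y)\notin K[y]$. Let $\pi$ be the endomorphism of $A_2$ (a retraction onto $K[r]$) defined by $\pi(x)=x+w(x,y)$, $\pi(y)=0$, and let $f\in K[t]\setminus K$. Then $\pi$ does not preserve the automorphic orbit of $f(r)$; that is, there is an automorphism $\alpha$ of $A_2$ such that $\pi(\alpha(f(r)))\neq\beta(f(r))$ for every automorphism $\beta$ of $A_2$.
   Context: Endomorphisms and automorphisms are $K$-algebra ones. The automorphic orbit of an element $q$ is $\{\beta(q):\beta\in\mathrm{Aut}(A_2)\}$, and an endomorphism preserves it if it maps this set into itself. *)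

From HB Require Import structures.
From mathcomp Require Import all_boot all_algebra.
From mathcomp Require Export monalg.
Set Implicit Arguments. Unset Strict Implicit. Unset Printing Implicit Defensive.
Import GRing.Theory.
Local Open Scope ring_scope.

(* The free associative algebra K<x,y>: monoid algebra of the free monoid on
   two letters; and the polynomial algebra K[x,y]: monoid algebra of the free
   commutative monoid on two letters. *)
Definition FreeAlg2 (K : fieldType) : lalgType K := {malg K[{fmonom 'I_2}]}.
Definition PolyAlg2 (K : fieldType) : lalgType K := {malg K[{cmonom 'I_2}]}.

Definition fx (K : fieldType) : FreeAlg2 K := << fmu (0 : 'I_2) >>.
Definition fy (K : fieldType) : FreeAlg2 K := << fmu (1 : 'I_2) >>.
Definition px (K : fieldType) : PolyAlg2 K := << ucm (0 : 'I_2) >>.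
Definition py (K : fieldType) : PolyAlg2 K := << ucm (1 : 'I_2) >>.

Definition peval (K : fieldType) (A : lalgType K) (p : {poly K}) (a : A) : A :=
  \sum_(i < size p) p`_i *: a ^+ i.

Definition in_ideal2 (R : nzRingType) (y w : R) : Prop :=
  exists n (a b : 'I_n -> R), w = \sum_(i < n) a i * y * b i.

Definition in_Kpoly (K : fieldType) (A : lalgType K) (y w : A) : Prop :=
  exists p : {poly K}, w = peval p y.

Definition is_aut (K : fieldType) (A : lalgType K) (f : {lrmorphism A -> A}) : Prop :=
  bijective f.

Definition lemma2p10_for (K : fieldType) (A : lalgType K) (x y : A) : Prop :=
  forall w : A, in_ideal2 y w -> ~ in_Kpoly y w ->
  forall pi : {lrmorphism A -> A}, pi x = x + w -> pi y = 0 ->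
  forall f : {poly K}, (1 < size f)%N ->
  exists alpha : {lrmorphism A -> A}, is_aut alpha /\
    forall beta : {lrmorphism A -> A}, is_aut beta ->
      pi (alpha (peval f (x + w))) != beta (peval f (x + w)).

(* Let phi : A_2 -> K[t] be the substitution x := t, y := 0.  Since w lies in the
   ideal of y, phi (r) = t, and for any endomorphism G with phi (G y) = 0 we have
   phi (G q) = phi q o phi (G x).  Take alpha : x |-> y + x^N, y |-> x.  If
   pi (alpha (f r)) = beta (f r) for an automorphism beta, applying phi o beta^-1
   gives f o (P o u) = f with P = phi (alpha r) and u = phi (beta^-1 r); comparing
   degrees forces deg P = 1.  But w = y Q(x, y) in the commutative image, and for
   N beyond the y-degree of Q the coefficient of t^N in P = t^N + t Q(t^N, t) is 1,
   so deg P >= N >= 2. *)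

From HB Require Import structures.
From mathcomp Require Import all_boot all_algebra.
From mathcomp Require Import finmap monalg zify.
Set Implicit Arguments.
Unset Strict Implicit.
Unset Printing Implicit Defensive.
Import GRing.Theory.
Local Open Scope ring_scope.

Lemma peval_comp_poly (K : fieldType) (p q : {poly K}) : peval p q = p \Po q.
Proof. by rewrite comp_polyE. Qed.

Lemma rmorph_peval (K : fieldType) (A B : lalgType K) (F : {rmorphism A -> B}) :
  (forall c : K, F c%:A = c%:A) -> forall p a, F (peval p a) = peval p (F a).
Proof.
move=> Falg p a; rewrite /peval rmorph_sum; apply: eq_bigr => i _.
by rewrite -mulr_algl rmorphM rmorphXn Falg mulr_algl.
Qed.

Lemma comp_poly_comp_neq (R : idomainType) (f p u : {poly R}) :
  (1 < size f)%N -> (2 < size p)%N -> f \Po (p \Po u) != f.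
Proof.
move=> f_gt1 p_gt2; apply/eqP => fixed_f.
have := size_comp_poly f (p \Po u); rewrite fixed_f size_comp_poly.
move: (size f) (size p) (size u) f_gt1 p_gt2 => sf sp su; clear.
case: su => [|[|su]] /=; nia.
Qed.

Lemma coef_horner_Xn (R : comNzRingType) (Q : {poly {poly R}}) N :
  (\max_(j < size Q) size (Q`_j)%R < N)%N -> (Q.['X ^+ N])`_N.-1 = 0.
Proof.
move=> Q_lt; rewrite horner_coef coef_sum big1 // => -[[|j] lt_j] _ /=.
  rewrite expr0 mulr1 nth_default //.
  have := @leq_bigmax _ (fun j : 'I_(size Q) => size (Q`_j)%R) (Ordinal lt_j).
  by move: Q_lt; set mx := bigop _ _ _ => /= Q_lt; lia.
rewrite -exprM coefMXn ifT //; lia.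
Qed.

Lemma size_Xn_add_X_horner (R : comNzRingType) (Q : {poly {poly R}}) N :
  (\max_(j < size Q) size (Q`_j)%R < N)%N ->
  (N < size ('X ^+ N + 'X * Q.['X ^+ N])%R)%N.
Proof.
move=> Q_lt; have coefN : ('X ^+ N + 'X * Q.['X ^+ N])`_N = 1.
  rewrite coefD coefXn eqxx coefXM ifN ?coef_horner_Xn ?addr0 //; lia.
rewrite ltnNge; apply/negP => /(nth_default 0).
by rewrite coefN => /eqP; rewrite oner_eq0.
Qed.

Lemma rmorph_in_ideal2 (R : nzRingType) (S : comNzRingType)
    (F : {rmorphism R -> S}) (y w : R) :
  in_ideal2 y w -> exists q, F w = F y * q.
Proof.
case=> n [a [b ->]]; exists (\sum_(i < n) F (a i) * F (b i)).
rewrite rmorph_sum mulr_sumr; apply: eq_bigr => i _.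
by rewrite !rmorphM mulrAC mulrC.
Qed.

Definition lrmorph_inv (R : nzRingType) (A B : lalgType R)
    (f : {lrmorphism A -> B}) (g : B -> A) of cancel f g & cancel g f : B -> A :=
  g.
Arguments lrmorph_inv {R A B f g}.

Section LRMorphismInverse.
Variables (R : nzRingType) (A B : lalgType R) (f : {lrmorphism A -> B}) (g : B -> A).
Hypotheses (fK : cancel f g) (gK : cancel g f).

HB.instance Definition _ := GRing.isZmodMorphism.Build B A (lrmorph_inv fK gK)
  (can2_zmod_morphism fK gK).
HB.instance Definition _ := GRing.isMonoidMorphism.Build B A (lrmorph_inv fK gK)
  (can2_monoid_morphism fK gK).
HB.instance Definition _ := GRing.isScalable.Build R B A *:%R (lrmorph_inv fK gK)
  (can2_scalable fK gK).

End LRMorphismInverse.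

Section TwoGeneratorMonoidAlgebra.

Variables (K : fieldType) (M : monomType) (x0 y0 : M).
(* [meval a b m] evaluates the monomial m at x := a, y := b; it is only required
   to be multiplicative on admissible pairs: all pairs for free monomials,
   commuting pairs for commutative ones. *)
Variable admissible : forall B : nzRingType, B -> B -> Prop.
Variable meval : forall B : nzRingType, B -> B -> M -> B.
Arguments admissible {B}.
Arguments meval {B}.

Local Notation A := {malg K[M]}.

Hypothesis meval1 : forall (B : nzRingType) (a b : B), meval a b mone = 1.
Hypothesis mevalM : forall (B : nzRingType) (a b : B), admissible a b ->
  {morph meval a b : m1 m2 / mmul m1 m2 >-> m1 * m2}.
Arguments mevalM {B a b}.
Hypothesis meval_x : forall (B : nzRingType) (a b : B), meval a b x0 = a.
Hypothesis meval_y : forall (B : nzRingType) (a b : B), meval a b y0 = b.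
Hypothesis rmorph_meval : forall (B C : nzRingType) (F : {rmorphism B -> C}) a b m,
  F (meval a b m) = meval (F a) (F b) m.
Hypothesis malgU_meval : forall m, << m >> = meval (<< x0 >> : A) << y0 >> m.
Hypothesis admissible_comm : forall (B : nzRingType) (a b : B),
  GRing.comm a b -> admissible a b.
Arguments admissible_comm {B a b}.
Hypothesis admissible_malg : forall a b : A, admissible a b.

Lemma malg_algE (c : K) : c%:A = << c *g mone >> :> A.
Proof. by rewrite -mul_malgC mulr1. Qed.

Lemma malgU_alg (c : K) m : << c *g m >> = c%:A * (<< m >> : A).
Proof. by rewrite malg_algE malgM_def fgmulUU mulr1 mul1m. Qed.

Lemma malg_alg_comm (c : K) (v : A) : GRing.comm c%:A v.
Proof.
rewrite /GRing.comm [v]monalgE mulr_sumr mulr_suml; apply: eq_bigr => m _.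
by rewrite malg_algE !malgM_def !fgmulUU mulm1 mul1m mulrC.
Qed.

Section Evaluation.
Variables (B : nzRingType) (i : {rmorphism K -> B}) (a b : B).

Lemma mmap_meval_alg c : mmap i (meval a b) c%:A = i c.
Proof. by rewrite malg_algE mmapU meval1 mulr1. Qed.

Lemma mmap_mevalU m : mmap i (meval a b) << m >> = meval a b m.
Proof. by rewrite mmapU -[X in X * _]/(i 1) rmorph1 mul1r. Qed.

Lemma mmap_meval_x : mmap i (meval a b) << x0 >> = a.
Proof. by rewrite mmap_mevalU meval_x. Qed.

Lemma mmap_meval_y : mmap i (meval a b) << y0 >> = b.
Proof. by rewrite mmap_mevalU meval_y. Qed.

Lemma mmap_meval_is_monoid_morphism :
  admissible a b -> (forall c v, GRing.comm (i c) v) ->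
  monoid_morphism (mmap i (meval a b)).
Proof.
move=> ab i_central; split=> [|q1 q2].
  by rewrite -(scale1r (1 : A)) mmap_meval_alg rmorph1.
rewrite malgME raddf_sum mulr_suml /=; apply: eq_bigr => m1 _.
rewrite raddf_sum mulr_sumr /=; apply: eq_bigr => m2 _.
rewrite mmapU /= rmorphM (mevalM ab) -mulrA [X in _ * X = _]mulrA.
by rewrite (i_central q2@_m2) !mulrA.
Qed.

End Evaluation.

Definition malg_eval (B : comNzRingType) (i : {rmorphism K -> B}) (a b : B) :
  A -> B := mmap i (meval a b).
Arguments malg_eval {B}.

HB.instance Definition _ (B : comNzRingType) (i : {rmorphism K -> B}) (a b : B) :=
  GRing.isZmodMorphism.Build A B (malg_eval i a b)
    (mmap_is_additive (f := i) (h := meval a b)).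
HB.instance Definition _ (B : comNzRingType) (i : {rmorphism K -> B}) (a b : B) :=
  GRing.isMonoidMorphism.Build A B (malg_eval i a b)
    (@mmap_meval_is_monoid_morphism _ i a b (admissible_comm (mulrC a b))
       (fun _ _ => mulrC _ _)).

Section EvaluationComm.
Variables (B : comNzRingType) (i : {rmorphism K -> B}) (a b : B).

Lemma malg_eval_alg c : malg_eval i a b c%:A = i c.
Proof. exact: mmap_meval_alg. Qed.

Lemma malg_eval_x : malg_eval i a b << x0 >> = a.
Proof. exact: mmap_meval_x. Qed.

Lemma malg_eval_y : malg_eval i a b << y0 >> = b.
Proof. exact: mmap_meval_y. Qed.

End EvaluationComm.

Definition malg_endo (a b : A) : A -> A := mmap (in_alg A) (meval a b).

HB.instance Definition _ a b := GRing.isZmodMorphism.Build A A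
  (malg_endo a b) (mmap_is_additive (f := in_alg A) (h := meval a b)).
HB.instance Definition _ a b := GRing.isMonoidMorphism.Build A A
  (malg_endo a b)
  (@mmap_meval_is_monoid_morphism _ (in_alg A) a b (admissible_malg a b)
     malg_alg_comm).

Lemma malg_endo_x a b : malg_endo a b << x0 >> = a.
Proof. exact: mmap_meval_x. Qed.

Lemma malg_endo_y a b : malg_endo a b << y0 >> = b.
Proof. exact: mmap_meval_y. Qed.

Fact malg_endo_is_scalable a b : scalable (malg_endo a b).
Proof.
move=> c q; rewrite -mulr_algl rmorphM -[RHS]mulr_algl; congr (_ * _).
exact: mmap_meval_alg.
Qed.

HB.instance Definition _ a b := GRing.isScalable.Build K A A *:%R
  (malg_endo a b) (malg_endo_is_scalable a b).

Lemma rmorph_malgE (B : nzRingType) (F : {rmorphism A -> B}) q :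
  F q = mmap (F \o in_alg A) (meval (F << x0 >>) (F << y0 >>)) q.
Proof.
rewrite {1}[q]monalgE rmorph_sum mmapE; apply: eq_bigr => m _.
by rewrite malgU_alg rmorphM (malgU_meval m) rmorph_meval.
Qed.

Lemma malg_rmorph_eq (B : nzRingType) (F1 F2 : {rmorphism A -> B}) :
  F1 << x0 >> = F2 << x0 >> -> F1 << y0 >> = F2 << y0 >> ->
  (forall c : K, F1 c%:A = F2 c%:A) -> F1 =1 F2.
Proof.
move=> Fx Fy Falg q; rewrite rmorph_malgE [RHS]rmorph_malgE Fx Fy !mmapE.
by apply: eq_bigr => m _ /=; rewrite Falg.
Qed.

Definition triangular_swap N : {lrmorphism A -> A} :=
  malg_endo (<< y0 >> + << x0 >> ^+ N) << x0 >>.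

Definition triangular_swap_inv N : {lrmorphism A -> A} :=
  malg_endo << y0 >> (<< x0 >> - << y0 >> ^+ N).

(* Stated through the rmorphism coercion, so that they also apply to the terms
   produced by rmorphD and its siblings. *)
Lemma triangular_swap_x N :
  (triangular_swap N : {rmorphism A -> A}) << x0 >> = << y0 >> + << x0 >> ^+ N.
Proof. exact: malg_endo_x. Qed.

Lemma triangular_swap_y N :
  (triangular_swap N : {rmorphism A -> A}) << y0 >> = << x0 >>.
Proof. exact: malg_endo_y. Qed.

Lemma triangular_swap_inv_x N :
  (triangular_swap_inv N : {rmorphism A -> A}) << x0 >> = << y0 >>.
Proof. exact: malg_endo_x. Qed.

Lemma triangular_swap_inv_y N :
  (triangular_swap_inv N : {rmorphism A -> A}) << y0 >> = << x0 >> - << y0 >> ^+ N.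
Proof. exact: malg_endo_y. Qed.

Lemma triangular_swap_bij N : bijective (triangular_swap N).
Proof.
exists (triangular_swap_inv N) => q.
- apply: (@malg_rmorph_eq _ (triangular_swap_inv N \o triangular_swap N) idfun).
  + by rewrite /= triangular_swap_x rmorphD rmorphXn triangular_swap_inv_x
      triangular_swap_inv_y subrK.
  + by rewrite /= triangular_swap_y triangular_swap_inv_x.
  + by move=> c; rewrite /= !rmorph_alg.
- apply: (@malg_rmorph_eq _ (triangular_swap N \o triangular_swap_inv N) idfun).
  + by rewrite /= triangular_swap_inv_x triangular_swap_y.
  + by rewrite /= triangular_swap_inv_y rmorphB rmorphXn triangular_swap_x
      triangular_swap_y addrK.
  + by move=> c; rewrite /= !rmorph_alg.
Qed.

Definition eval_xaxis : {rmorphism A -> {poly K}} := malg_eval (@polyC K) 'X 0.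

Lemma eval_xaxis_x : eval_xaxis << x0 >> = 'X.
Proof. exact: malg_eval_x. Qed.

Lemma eval_xaxis_y : eval_xaxis << y0 >> = 0.
Proof. exact: malg_eval_y. Qed.

Lemma eval_xaxis_alg c : eval_xaxis c%:A = c%:A.
Proof. by rewrite alg_polyC; exact: malg_eval_alg. Qed.

Lemma eval_xaxis_peval p q : eval_xaxis (peval p q) = p \Po eval_xaxis q.
Proof. by rewrite rmorph_peval ?peval_comp_poly //; exact: eval_xaxis_alg. Qed.

Lemma eval_xaxis_ideal2 w : in_ideal2 << y0 >> w -> eval_xaxis w = 0.
Proof. by case/(rmorph_in_ideal2 eval_xaxis) => q ->; rewrite eval_xaxis_y mul0r. Qed.

Lemma eval_xaxis_subst (G : {lrmorphism A -> A}) :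
  eval_xaxis (G << y0 >>) = 0 ->
  forall q, eval_xaxis (G q) = eval_xaxis q \Po eval_xaxis (G << x0 >>).
Proof.
move=> Gy q; set u := eval_xaxis (G << x0 >>).
change ((eval_xaxis \o G) q = (comp_poly u \o eval_xaxis) q); move: q.
apply: malg_rmorph_eq => [||c] /=.
- by rewrite eval_xaxis_x comp_polyX.
- by rewrite Gy eval_xaxis_y rmorph0.
- by rewrite rmorph_alg !eval_xaxis_alg alg_polyC comp_polyC.
Qed.

(* [ev2] remembers the y-degree: w = y * Q(x, y), so under x := t^N, y := t with
   N beyond the y-degree of Q the coefficient of t^N in the image of x + w is 1. *)
Lemma triangular_swap_nonlinear (w : A) : in_ideal2 << y0 >> w ->
  exists N, (2 < size (eval_xaxis (triangular_swap N (<< x0 >> + w)%R)))%N.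
Proof.
move=> w_ideal.
pose ev2 : {rmorphism A -> {poly {poly K}}} :=
  malg_eval (@polyC {poly K} \o @polyC K) 'X 'X%:P.
have ev2_x : ev2 << x0 >> = 'X by exact: malg_eval_x.
have ev2_y : ev2 << y0 >> = 'X%:P by exact: malg_eval_y.
have ev2_alg c : ev2 c%:A = c%:P%:P by exact: malg_eval_alg.
have [Q ev2_w] := rmorph_in_ideal2 ev2 w_ideal.
pose N := (\max_(j < size Q) size (Q`_j)%R).+2; exists N.
have eval_swap q : eval_xaxis (triangular_swap N q) = (ev2 q).['X ^+ N].
  change ((eval_xaxis \o triangular_swap N) q = (horner_eval ('X ^+ N) \o ev2) q).
  move: q; apply: malg_rmorph_eq => [||c] /=.
  - rewrite triangular_swap_x rmorphD rmorphXn eval_xaxis_x eval_xaxis_y ev2_x.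
    by rewrite add0r /horner_eval hornerX.
  - by rewrite triangular_swap_y eval_xaxis_x ev2_y /horner_eval hornerC.
  - by rewrite rmorph_alg eval_xaxis_alg ev2_alg /horner_eval hornerC alg_polyC.
rewrite eval_swap rmorphD ev2_w ev2_x ev2_y /horner_eval hornerD hornerX hornerCM.
exact: leq_trans (size_Xn_add_X_horner _).
Qed.

Theorem lemma2p10_malg : lemma2p10_for (<< x0 >> : A) << y0 >>.
Proof.
move=> w w_ideal _ pi pi_x pi_y f f_nonconst; set r := << x0 >> + w.
have [N nonlinear] := triangular_swap_nonlinear w_ideal.
exists (triangular_swap N); split; first exact: triangular_swap_bij.
move=> beta [g betaK gK]; apply/eqP.
pose G : {lrmorphism A -> A} := lrmorph_inv betaK gK \o pi.
have G_y : eval_xaxis (G << y0 >>) = 0 by rewrite /= pi_y !rmorph0.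
have lhs : eval_xaxis (G (triangular_swap N (peval f r))) =
           f \Po (eval_xaxis (triangular_swap N r) \Po eval_xaxis (G << x0 >>)).
  rewrite eval_xaxis_subst // rmorph_peval ?eval_xaxis_peval ?comp_polyA //.
  exact: rmorph_alg.
have rhs : eval_xaxis (lrmorph_inv betaK gK (beta (peval f r))) = f.
  rewrite [lrmorph_inv _ _ _]betaK eval_xaxis_peval rmorphD eval_xaxis_x.
  by rewrite eval_xaxis_ideal2 // addr0 comp_polyXr.
move=> /(congr1 (eval_xaxis \o lrmorph_inv betaK gK)) /=.
change (eval_xaxis (G (triangular_swap N (peval f r))) =
        eval_xaxis (lrmorph_inv betaK gK (beta (peval f r))) -> False).
by rewrite lhs rhs; apply/eqP; exact: comp_poly_comp_neq.
Qed.

End TwoGeneratorMonoidAlgebra.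

Lemma malgU_mul (K : fieldType) (M : monomType) (m1 m2 : M) :
  << mmul m1 m2 >> = << m1 >> * << m2 >> :> {malg K[M]}.
Proof. by rewrite malgM_def fgmulUU mulr1. Qed.

Definition meval_free (B : nzRingType) (a b : B) (m : fmonom 'I_2) : B :=
  \prod_(i <- m) (if i == 0 then a else b).

Lemma fmu_eval (K : fieldType) (i : 'I_2) :
  << fmu i >> = if i == 0 then fx K else fy K.
Proof. by case: i => -[|[|//]] lt_i; congr << fmu _ >>; apply: val_inj. Qed.

Lemma malgU_meval_free (K : fieldType) (m : fmonom 'I_2) :
  << m >> = meval_free (fx K) (fy K) m.
Proof.
case: m => s; elim: s => [|i s IH].
  by rewrite /meval_free big_nil -fmoneE -mpolyC1E.
have -> : FMonom (i :: s) = mmul (fmu i) (FMonom s).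
  by apply: val_inj; rewrite /= fmM fmU.
by rewrite malgU_mul IH /meval_free fmM fmU big_cons fmu_eval.
Qed.

Lemma lemma2p10_free (K : fieldType) : lemma2p10_for (fx K) (fy K).
Proof.
apply: (@lemma2p10_malg K _ (fmu 0) (fmu 1) (fun _ _ _ => True) meval_free).
- by move=> B a b; rewrite /meval_free fm1 big_nil.
- by move=> B a b _ m1 m2; rewrite /meval_free fmM big_cat.
- by move=> B a b; rewrite /meval_free fmU big_seq1.
- by move=> B a b; rewrite /meval_free fmU big_seq1.
- move=> B C F a b m; rewrite /meval_free rmorph_prod.
  by apply: eq_bigr => i _; case: ifP.
- exact: malgU_meval_free.
- by [].
- by [].
Qed.

Definition meval_comm (B : nzRingType) (a b : B) (m : cmonom 'I_2) : B :=
  a ^+ m 0 * b ^+ m 1.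

Lemma malgU_iter (K : fieldType) (M : monomType) (u : M) k :
  << iter k (mmul u) mone >> = << u >> ^+ k :> {malg K[M]}.
Proof.
by elim: k => [|k IH]; rewrite ?expr0 -?mpolyC1E // iterS malgU_mul IH exprS.
Qed.

Lemma cmonom_iter (u : cmonom 'I_2) k i : iter k (mmul u) mone i = (u i * k)%N.
Proof. by elim: k => [|k IH]; rewrite ?cm1 ?muln0 // iterS cmM IH mulnS. Qed.

Lemma cmonom2E (m : cmonom 'I_2) :
  m = mmul (iter (m 0) (mmul (ucm 0)) mone) (iter (m 1) (mmul (ucm 1)) mone).
Proof.
apply/eqP/cmP => i; rewrite cmM !cmonom_iter !cmU.
case: i => -[|[|//]] lt_i; rewrite /= ?mul1n ?mul0n ?addn0.
  by congr (m _); apply: val_inj.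
by congr (m _); apply: val_inj.
Qed.

Lemma lemma2p10_comm (K : fieldType) : lemma2p10_for (px K) (py K).
Proof.
apply: (@lemma2p10_malg K _ (ucm 0) (ucm 1) (fun B a b => @GRing.comm B a b)
  meval_comm).
- by move=> B a b; rewrite /meval_comm !cm1 !expr0 mulr1.
- move=> B a b ab m1 m2; rewrite /meval_comm !cmM !exprD -!mulrA; congr (_ * _).
  by rewrite !mulrA; congr (_ * _); apply/commrX/commr_sym/commrX.
- by move=> B a b; rewrite /meval_comm !cmU /= expr1 expr0 mulr1.
- by move=> B a b; rewrite /meval_comm !cmU /= expr1 expr0 mul1r.
- by move=> B C F a b m; rewrite /meval_comm rmorphM !rmorphXn.
- by move=> m; rewrite {1}(cmonom2E m) malgU_mul !malgU_iter.
- by [].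
- by move=> a b; apply: mulrC.
Qed.

Theorem lemma2p10 (K : fieldType) (charK0 : [pchar K] =i pred0) :
  lemma2p10_for (fx K) (fy K) /\ lemma2p10_for (px K) (py K).
Proof. by split; [exact: lemma2p10_free | exact: lemma2p10_comm]. Qed.
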